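(* Let $\mathbf{A}$ be a nonempty subset of $\mathbf{P}_{\mathbf{M}}$. Then the following are equivalent: (i) there exists a subclass $\mathbf{X}\subseteq\mathbf{M}$ with $\mathbf{P}_{\mathbf{X}}=\mathbf{A}$; (ii) $\mathbf{A}$ is a submonoid of $(\mathbf{F},\circ)$; (iii) $\mathbf{A}$ is a submonoid of $(\mathbf{P}_{\mathbf{M}},\circ)$.
   Context: All metric spaces are assumed to have nonempty underlying sets; $\mathbf{M}$ is the class of all metric spaces. $\mathbf{F}$ is the set of all functions $f:[0,\infty)\to[0,\infty)$, a monoid under composition with identity $\mathrm{id}(x)=x$; a submonoid is a subset closed under composition containing $\mathrm{id}$. For a class $\mathbf{X}$ of metric spaces, $\mathbf{P}_{\mathbf{X}}$ denotes the set of all $f\in\mathbf{F}$ such that for every metric space $(X,d)$, if $(X,d)\in\mathbf{X}$ then $(X,f\circ d)\in\mathbf{X}$ (where $f\circ d(x,y)=f(d(x,y))$; membership requires $f\circ d$ to be a metric). Thus $\mathbf{P}_{\mathbf{M}}$ is the set of metric preserving functions, i.e. those $f$ for which $f\circ d$ is a metric whenever $d$ is a metric. *)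

From Stdlib Require Import Reals.
Open Scope R_scope.

Definition Rnn : Type := { x : R | 0 <= x }.
Definition rval (x : Rnn) : R := proj1_sig x.

Definition Fun : Type := Rnn -> Rnn.
Definition idF : Fun := fun x => x.
Definition compF (f g : Fun) : Fun := fun x => f (g x).

Definition is_metric {X : Type} (d : X -> X -> Rnn) : Prop :=
  (forall x y, rval (d x y) = 0 <-> x = y) /\
  (forall x y, d x y = d y x) /\
  (forall x y z, rval (d x z) <= rval (d x y) + rval (d y z)).

(* A class of "spaces with a distance": a predicate on pairs (X, d). *)
Definition mclass : Type := forall X : Type, (X -> X -> Rnn) -> Prop.

Definition Mall : mclass := fun X d => inhabited X /\ is_metric d.

Definition subclass_of_M (C : mclass) : Prop :=
  forall X d, C X d -> Mall X d.

Definition P (C : mclass) (f : Fun) : Prop :=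
  forall X (d : X -> X -> Rnn), C X d -> C X (fun x y => f (d x y)).

Definition PM : Fun -> Prop := P Mall.

Definition submonoid_F (A : Fun -> Prop) : Prop :=
  A idF /\ (forall f g, A f -> A g -> A (compF f g)).

Definition submonoid_PM (A : Fun -> Prop) : Prop :=
  (forall f, A f -> PM f) /\ A idF /\ (forall f g, A f -> A g -> A (compF f g)).

(* P_X is a submonoid for every class X, because closure of X under f and g gives closure under f o g.
   Conversely, a submonoid A of P_M is realised by the class of all spaces ([0,oo), f o |s - t|) with
   f in A: composing with A keeps this class closed, and since |0 - t| = t, the class determines
   f from the metric f o |s - t|, so every g preserving the class lies in A. *)

From Stdlib Require Import Reals Lra Eqdep ProofIrrelevance FunctionalExtensionality.
Open Scope R_scope.

Lemma rval_inj (x y : Rnn) : rval x = rval y -> x = y.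
Proof. destruct x, y; simpl; intros ->; f_equal; apply proof_irrelevance. Qed.

Section PreservingFunctions.
Variable C : mclass.

Lemma P_idF : P C idF.
Proof. intros X d HC; exact HC. Qed.

Lemma P_compF (f g : Fun) : P C f -> P C g -> P C (compF f g).
Proof. intros Hf Hg X d HC; exact (Hf X _ (Hg X d HC)). Qed.

Lemma P_submonoid_F : submonoid_F (P C).
Proof. split; [exact P_idF | exact P_compF]. Qed.

End PreservingFunctions.

Definition zeroR : Rnn := exist _ 0 (Rle_refl 0).

Definition dist (x y : Rnn) : Rnn := exist _ (Rabs (rval x - rval y)) (Rabs_pos _).

Lemma dist0r (t : Rnn) : dist zeroR t = t.
Proof.
apply rval_inj; destruct t as [t Ht]; simpl.
rewrite Rabs_minus_sym, Rminus_0_r; apply Rabs_right; lra.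
Qed.

Lemma Mall_dist : Mall Rnn dist.
Proof.
split; [exact (inhabits zeroR) | split; [|split]].
- intros x y; simpl; split.
  + intro H; apply rval_inj; destruct (Rcase_abs (rval x - rval y)).
    * rewrite Rabs_left in H; lra.
    * rewrite Rabs_right in H; lra.
  + intros ->; rewrite Rminus_diag, Rabs_R0; reflexivity.
- intros x y; apply rval_inj, Rabs_minus_sym.
- intros x y z; simpl.
  replace (rval x - rval z) with ((rval x - rval y) + (rval y - rval z)) by ring.
  apply Rabs_triang.
Qed.

Definition castR {X : Type} (p : X = Rnn) (x : X) : Rnn := eq_rect X (fun T => T) x Rnn p.

(* The type equality [p] lets a class, which quantifies over all carriers [X], single out the
   carrier [Rnn] itself. *)
Definition dist_class (A : Fun -> Prop) : mclass := fun X d =>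
  Mall X d /\ exists (p : X = Rnn) f, A f /\
    forall x y, d x y = f (dist (castR p x) (castR p y)).

Lemma dist_class_sub_M (A : Fun -> Prop) : subclass_of_M (dist_class A).
Proof. intros X d [HM _]; exact HM. Qed.

Lemma P_dist_class_sub (A : Fun -> Prop) (g : Fun) :
  A idF -> P (dist_class A) g -> A g.
Proof.
intros Hid Hg.
assert (Hdist : dist_class A Rnn dist) by
  (split; [exact Mall_dist | exists eq_refl, idF; split; [exact Hid | reflexivity]]).
destruct (Hg _ _ Hdist) as [_ [p [f [Hf Hgf]]]].
rewrite (UIP_refl _ _ p) in Hgf.
replace g with f; [exact Hf |].
apply functional_extensionality; intro t.
specialize (Hgf zeroR t); simpl in Hgf.
rewrite dist0r in Hgf; symmetry; exact Hgf.
Qed.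

Lemma sub_P_dist_class (A : Fun -> Prop) (g : Fun) :
  (forall f, A f -> PM f) -> (forall f h, A f -> A h -> A (compF f h)) ->
  A g -> P (dist_class A) g.
Proof.
intros HPM Hcomp Hg X d [HM [p [f [Hf Hd]]]]; split.
- exact (HPM g Hg X d HM).
- exists p, (compF g f); split; [exact (Hcomp g f Hg Hf) |].
  intros x y; rewrite Hd; reflexivity.
Qed.

Theorem mainTheorem8 (A : Fun -> Prop) :
  (exists f, A f) -> (forall f, A f -> PM f) ->
  ((exists C : mclass, subclass_of_M C /\ (forall f, P C f <-> A f))
     <-> submonoid_F A) /\
  (submonoid_F A <-> submonoid_PM A).
Proof.
intros _ HPM; split; split.
- intros [C [_ HPA]].
  destruct (P_submonoid_F C) as [Hid Hcomp].
  split; [apply HPA, Hid |].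
  intros f g Hf Hg; apply HPA, Hcomp; apply HPA; assumption.
- intros [Hid Hcomp]; exists (dist_class A); split; [apply dist_class_sub_M |].
  intro g; split; [apply P_dist_class_sub, Hid | apply sub_P_dist_class; assumption].
- intros [Hid Hcomp]; exact (conj HPM (conj Hid Hcomp)).
- intros [_ HA]; exact HA.
Qed.
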